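(* $S$ is antimultiplicative, that is $S(ab)=S(b)S(a)$ for all $a,b\in A$.
   Context: Let $A$ be an associative algebra over a field $k$ (possibly without identity) with non-degenerate product, multiplier algebra $M(A)$ and left multipliers $L(A)$. Let $\Delta:A\to M(A\otimes A)$ be an algebra homomorphism (not necessarily coassociative) with Galois maps $T_{1}(a\otimes b)=\Delta(a)(1\otimes b)$ and $T_{2}(a\otimes b)=(a\otimes 1)\Delta(b)$ lying in $A\otimes A$, and $\varepsilon:A\to k$ linear with $(\varepsilon\otimes\iota)T_{1}(a\otimes b)=ab=(\iota\otimes\varepsilon)T_{2}(a\otimes b)$. Suppose $T_{1},T_{2}$ are bijective, $T_{1}^{-1}=(\iota\otimes\varepsilon\otimes\iota)(\iota\otimes T_{1}^{-1})(\Delta\otimes\iota)$ (left $A$-colinear) and $T_{2}^{-1}=(\iota\otimes\varepsilon\otimes\iota)(T_{2}^{-1}\otimes\iota)(\iota\otimes\Delta)$ (right $A$-colinear); i.e. $(A,\Delta)$ is a generalized multiplier Hopf coquasigroup. The map $S:A\to L(A)$ is defined by $S(a)b=(\varepsilon\otimes\iota)T_{1}^{-1}(a\otimes b)$. *)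

From HB Require Import structures.
From mathcomp Require Import all_boot all_algebra.
Set Implicit Arguments. Unset Strict Implicit. Unset Printing Implicit Defensive.
Import GRing.Theory.
Local Open Scope ring_scope.

Definition lin {k : fieldType} {U V : lmodType k} (f : U -> V) : Prop :=
  forall (r : k) (x y : U), f (r *: x + y) = r *: f x + f y.

Definition linform {k : fieldType} {U : lmodType k} (f : U -> k) : Prop :=
  forall (r : k) (x y : U), f (r *: x + y) = r * f x + f y.

Definition bilin {k : fieldType} {U V W : lmodType k} (f : U -> V -> W) : Prop :=
  (forall v, lin (fun u => f u v)) /\ (forall u, lin (f u)).

Definition trilin {k : fieldType} {U V W Y : lmodType k}
  (f : U -> V -> W -> Y) : Prop :=
  (forall v w, lin (fun u => f u v w)) /\ (forall u w, lin (fun v => f u v w))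
  /\ (forall u v, lin (f u v)).

Definition is_tensor2 {k : fieldType} {U V T : lmodType k}
  (t : U -> V -> T) : Prop :=
  bilin t /\
  forall (X : lmodType k) (f : U -> V -> X), bilin f ->
    exists g : T -> X, [/\ lin g, (forall u v, g (t u v) = f u v) &
      (forall h : T -> X, lin h -> (forall u v, h (t u v) = f u v) -> h =1 g)].

Definition is_tensor3 {k : fieldType} {U V W T : lmodType k}
  (t : U -> V -> W -> T) : Prop :=
  trilin t /\
  forall (X : lmodType k) (f : U -> V -> W -> X), trilin f ->
    exists g : T -> X, [/\ lin g, (forall u v w, g (t u v w) = f u v w) &
      (forall h : T -> X, lin h -> (forall u v w, h (t u v w) = f u v w) ->
         h =1 g)].

Definition nondeg_assoc_algebra {k : fieldType} {A : lmodType k}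
  (mul : A -> A -> A) : Prop :=
  [/\ bilin mul,
      (forall a b c, mul a (mul b c) = mul (mul a b) c),
      (forall a, (forall b, mul a b = 0) -> a = 0) &
      (forall b, (forall a, mul a b = 0) -> b = 0)].

(* (l, r) is a multiplier of the algebra (X, mul):
   l x = m x  and  r x = x m. *)
Definition is_multiplier {k : fieldType} {X : lmodType k}
  (mul : X -> X -> X) (l r : X -> X) : Prop :=
  [/\ lin l, lin r,
      (forall x y, l (mul x y) = mul (l x) y),
      (forall x y, r (mul x y) = mul x (r y)) &
      (forall x y, mul (r x) y = mul x (l y))].

Definition S_of {k : fieldType} {A AA : lmodType k}
  (tens : A -> A -> AA) (epsL : AA -> A) (T1inv : AA -> AA) (a b : A) : A :=
  epsL (T1inv (tens a b)).

(* For b in A let Phi_b be the linear map x (x) y |-> (x (x) 1) T1^-1(b (x) y).  Multiplicativity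
   of Delta gives T1(Phi_b w)(e (x) f) = T1(w)(be (x) f), so by non-degeneracy of the product of
   A (x) A, T1^-1(ab (x) c) = Phi_b(T1^-1(a (x) c)).  Applying eps (x) id turns this into
   S(ab)c = S(b)(S(a)c), once eps is known to be multiplicative; that in turn follows from the
   same identity by applying the multiplication map, which is (eps (x) id) o T1.  The facts used
   about A (x) A (its elements are finite sums of pure tensors, linear maps agreeing on pure
   tensors agree, slice maps exist) rest on separating linear forms, obtained by Zorn's lemma. *)

From HB Require Import structures.
From mathcomp Require Import all_boot all_algebra.
From mathcomp Require Import boolp classical_sets.
Set Implicit Arguments. Unset Strict Implicit. Unset Printing Implicit Defensive.
Import GRing.Theory.
Local Open Scope classical_set_scope.
Local Open Scope ring_scope.

Section LinearMaps.
Variables (k : fieldType) (U V W : lmodType k).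

Lemma lin0 (f : U -> V) : lin f -> f 0 = 0.
Proof.
move=> lf; have := lf 1 0 0; rewrite scaler0 addr0 scale1r => f0.
by apply: (addIr (f 0)); rewrite add0r -f0.
Qed.

Lemma linD (f : U -> V) x y : lin f -> f (x + y) = f x + f y.
Proof. by move=> lf; have := lf 1 x y; rewrite !scale1r. Qed.

Lemma linZ (f : U -> V) r x : lin f -> f (r *: x) = r *: f x.
Proof. by move=> lf; have := lf r x 0; rewrite !addr0 lin0 // addr0. Qed.

Lemma linB (f : U -> V) x y : lin f -> f (x - y) = f x - f y.
Proof. by move=> lf; rewrite linD // -scaleN1r linZ // scaleN1r. Qed.

Lemma lin_sum (f : U -> V) (I : Type) (r : seq I) (F : I -> U) :
  lin f -> f (\sum_(i <- r) F i) = \sum_(i <- r) f (F i).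
Proof.
move=> lf; elim: r => [|i r IH]; first by rewrite !big_nil lin0.
by rewrite !big_cons linD // IH.
Qed.

Lemma lin_comp (f : V -> W) (g : U -> V) : lin f -> lin g -> lin (f \o g).
Proof. by move=> lf lg r x y /=; rewrite lg lf. Qed.

Lemma lin_add (f g : U -> V) : lin f -> lin g -> lin (fun x => f x + g x).
Proof. by move=> lf lg r x y /=; rewrite lf lg scalerDr addrACA. Qed.

Lemma lin_scale (c : k) (f : U -> V) : lin f -> lin (fun x => c *: f x).
Proof. by move=> lf r x y /=; rewrite lf scalerDr !scalerA mulrC. Qed.

Lemma lin_can (f g : U -> U) : lin f -> cancel f g -> cancel g f -> lin g.
Proof. by move=> lf fK gK r x y; apply: (can_inj fK); rewrite lf !gK. Qed.

End LinearMaps.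

Section LinearForms.
Variables (k : fieldType) (U : lmodType k).

Lemma linform_lin (phi : U -> k) : linform phi -> lin (phi : U -> k^o).
Proof. by []. Qed.

Lemma linformZ (phi : U -> k) r x : linform phi -> phi (r *: x) = r * phi x.
Proof. by move=> /linform_lin lphi; rewrite (linZ r x lphi). Qed.

Lemma linform_sum (phi : U -> k) (I : Type) (r : seq I) (F : I -> U) :
  linform phi -> phi (\sum_(i <- r) F i) = \sum_(i <- r) phi (F i).
Proof. by move=> /linform_lin lphi; rewrite (lin_sum r F lphi). Qed.

End LinearForms.

Section Separation.
Variables (k : fieldType) (V : lmodType k).

Definition subspace (X : set V) : Prop :=
  X 0 /\ forall r x y, X x -> X y -> X (r *: x + y).

Lemma subspaceZ (X : set V) r x : subspace X -> X x -> X (r *: x).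
Proof. by move=> [X0 XC] Xx; have := XC r _ _ Xx X0; rewrite addr0. Qed.

Lemma subspaceB (X : set V) x y : subspace X -> X x -> X y -> X (x - y).
Proof.
move=> sX Xx Xy; have := sX.2 1 _ _ Xx (subspaceZ (-1) sX Xy).
by rewrite scale1r scaleN1r.
Qed.

Lemma subspace_addline (X : set V) u :
  subspace X -> subspace [set x | exists l, X (x - l *: u)].
Proof.
move=> [X0 XC]; split; first by exists 0; rewrite scale0r subr0.
move=> r x y [l1 Xx] [l2 Xy]; exists (r * l1 + l2).
have -> : r *: x + y - (r * l1 + l2) *: u = r *: (x - l1 *: u) + (y - l2 *: u).
  by rewrite scalerDl -scalerA scalerBr opprD addrACA.
exact: XC.
Qed.

Lemma avoiding_coef_unique (M : set V) v u l1 l2 :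
  subspace M -> ~ M v -> M (u - l1 *: v) -> M (u - l2 *: v) -> l1 = l2.
Proof.
move=> sM nMv M1 M2; apply: contrapT => /eqP; rewrite -subr_eq0 => l12.
apply: nMv; rewrite -[v](scale1r) -(mulVf l12) -scalerA; apply: subspaceZ => //.
have := subspaceB sM M2 M1.
by rewrite opprB addrCA addrAC subrr add0r scalerBl.
Qed.

Lemma maximal_avoiding_spans (M : set V) v :
  subspace M -> ~ M v ->
  (forall N, subspace N -> M `<=` N -> ~ N v -> N `<=` M) ->
  forall u, exists l, M (u - l *: v).
Proof.
move=> sM nMv maxM u; apply: contrapT => nMu.
pose N := [set x | exists l, M (x - l *: u)].
have MN : M `<=` N by move=> x Mx; exists 0; rewrite scale0r subr0.
have Nu : N u by exists 1; rewrite scale1r subrr; case: sM.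
have nNv : ~ N v.
  move=> [l Mvu]; have [l0|l_neq0] := eqVneq l 0.
    by apply: nMv; rewrite l0 scale0r subr0 in Mvu.
  apply: nMu; exists l^-1.
  have -> : u - l^-1 *: v = (- l^-1) *: (v - l *: u).
    by rewrite scalerBr scalerA mulNr mulVf // scaleN1r opprK scaleNr addrC.
  exact: subspaceZ.
have /(_ _ Nu) Mu := maxM N (subspace_addline u sM) MN nNv.
by apply: nMu; exists 0; rewrite scale0r subr0.
Qed.

Lemma subspace_hyperplane (X : set V) v : subspace X -> ~ X v ->
  exists M, [/\ subspace M, X `<=` M, ~ M v & forall u, exists l, M (u - l *: v)].
Proof.
move=> sX nXv.
(* [set0] is admitted so that the empty chain has an upper bound. *)
pose P := fun M : set V => M = set0 \/ [/\ subspace M, X `<=` M & ~ M v].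
have chainP (F : set (set V)) : F `<=` P -> total_on F subset ->
    P (\bigcup_(M in F) M).
  move=> FP Ftot.
  have [[M0 FM0 [x0 M0x0]]|] := pselect (exists2 M, F M & M !=set0); last first.
    move=> nF; left; apply/seteqP; split=> // x [M FM Mx].
    by apply: nF; exists M => //; exists x.
  have good M x : F M -> M x -> [/\ subspace M, X `<=` M & ~ M v].
    by move=> FM Mx; case: (FP M FM) => // M_empty; rewrite M_empty in Mx.
  have [sM0 XM0 _] := good _ _ FM0 M0x0.
  right; split.
  - split; first by exists M0 => //; case: sM0.
    move=> r x y [M1 FM1 M1x] [M2 FM2 M2y].
    have [[sM1 _ _] [sM2 _ _]] := (good _ _ FM1 M1x, good _ _ FM2 M2y).
    case: (Ftot _ _ FM1 FM2) => [M12|M21].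
    + by exists M2 => //; apply: sM2.2 => //; apply: M12.
    + by exists M1 => //; apply: sM1.2 => //; apply: M21.
  - by move=> x Xx; exists M0 => //; apply: XM0.
  - by move=> [M FM Mv]; have [_ _] := good _ _ FM Mv.
have [M [PM maxM]] := Zorn_bigcup chainP.
have [sM XM nMv] : [/\ subspace M, X `<=` M & ~ M v].
  case: PM => // M0; exfalso; apply: (maxM X); last by right; split.
  by rewrite M0; split=> // /(_ 0 sX.1).
exists M; split=> //; apply: maximal_avoiding_spans => // N sN MN nNv.
apply: contrapT => nNM; apply: (maxM N); last by right; split=> //; exact: subset_trans XM MN.
by split.
Qed.

Lemma separating_linform (X : set V) v : subspace X -> ~ X v ->
  exists phi : V -> k, [/\ linform phi, forall x, X x -> phi x = 0 & phi v = 1].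
Proof.
move=> sX nXv; have [M [sM XM nMv spanM]] := subspace_hyperplane sX nXv.
pose phi u := projT1 (cid (spanM u)).
have phiP u : M (u - phi u *: v) := projT2 (cid (spanM u)).
have coef_phi u l : M (u - l *: v) -> phi u = l.
  exact: (avoiding_coef_unique sM nMv (phiP u)).
exists phi; split.
- move=> r x y; apply: coef_phi.
  have -> : r *: x + y - (r * phi x + phi y) *: v =
            r *: (x - phi x *: v) + (y - phi y *: v).
    by rewrite scalerDl -scalerA scalerBr opprD addrACA.
  by apply: sM.2; apply: phiP.
- by move=> x Xx; apply: coef_phi; rewrite scale0r subr0; apply: XM.
- by apply: coef_phi; rewrite scale1r subrr; case: sM.
Qed.

End Separation.

(* Induction on [n]: either [x ord_max] is a combination of the other [x i] and can be
   absorbed into the [y i], or a functional separating it from them shows [y ord_max = 0]. *)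
Lemma bilin_sum_eq0 (k : fieldType) (U V T : lmodType k) (t : U -> V -> T) :
  bilin t -> forall n (x : 'I_n -> U) (y : 'I_n -> V),
  (forall phi : U -> k, linform phi -> \sum_(i < n) phi (x i) *: y i = 0) ->
  \sum_(i < n) t (x i) (y i) = 0.
Proof.
move=> [tl tr]; elim=> [|n IH] x y xy0; first by rewrite big_ord0.
rewrite big_ord_recr /=.
pose x' i := x (widen_ord (leqnSn n) i); pose y' i := y (widen_ord (leqnSn n) i).
pose X := [set u | exists c : 'I_n -> k, u = \sum_(i < n) c i *: x' i].
have sX : subspace X.
  split; first by exists (fun _ => 0); rewrite big1 // => i _; rewrite scale0r.
  move=> r _ _ [c1 ->] [c2 ->]; exists (fun i => r * c1 i + c2 i).
  rewrite scaler_sumr -big_split /=.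
  by apply: eq_bigr => i _; rewrite scalerDl scalerA.
have [[c xc]|nXx] := pselect (X (x ord_max)).
  have -> : \sum_(i < n) t (x' i) (y' i) + t (x ord_max) (y ord_max) =
            \sum_(i < n) t (x' i) (y' i + c i *: y ord_max).
    rewrite xc (lin_sum _ _ (tl _)) -big_split /=; apply: eq_bigr => i _.
    by rewrite linD // linZ // (linZ _ _ (tl _)).
  apply: IH => phi lphi; rewrite -[RHS](xy0 phi lphi) big_ord_recr /= xc.
  rewrite linform_sum // scaler_suml -big_split /=; apply: eq_bigr => i _.
  by rewrite scalerDr linformZ // scalerA mulrC.
have [phi [lphi phiX phix]] := separating_linform sX nXx.
have y0 : y ord_max = 0.
  have := xy0 phi lphi; rewrite big_ord_recr /= phix scale1r big1 ?add0r // => i _.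
  rewrite phiX ?scale0r //; exists (fun j => (j == i)%:R).
  rewrite (bigD1 i) //= eqxx scale1r big1 ?addr0 // => j /negbTE ->.
  by rewrite scale0r.
rewrite y0 lin0 // addr0; apply: IH => phi' lphi'.
by have := xy0 phi' lphi'; rewrite big_ord_recr /= y0 scaler0 addr0.
Qed.

Section TensorProduct.
Variables (k : fieldType) (U V T : lmodType k) (t : U -> V -> T).
Hypothesis tensor_t : is_tensor2 t.

Lemma tensor2_lift (X : lmodType k) (f : U -> V -> X) :
  bilin f -> exists g : T -> X, lin g /\ forall u v, g (t u v) = f u v.
Proof. by move=> /(tensor_t.2 X f) [g [lg gt _]]; exists g. Qed.

Lemma tensor2_ext (X : lmodType k) (g h : T -> X) :
  lin g -> lin h -> (forall u v, g (t u v) = h (t u v)) -> g =1 h.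
Proof.
move=> lg lh gh; have [[tl tr] univ] := tensor_t.
have bil : bilin (fun u v => h (t u v)).
  by split=> [v|u]; [exact: lin_comp lh (tl v) | exact: lin_comp lh (tr u)].
have [G [_ _ uniqG]] := univ _ _ bil.
by move=> s; rewrite (uniqG g lg gh) (uniqG h lh (fun _ _ => erefl)).
Qed.

Lemma tensor2_slice_l (phi : U -> k) : linform phi ->
  exists g : T -> V, lin g /\ forall u v, g (t u v) = phi u *: v.
Proof.
move=> lphi; apply: tensor2_lift; split=> [v r u1 u2 | u r v1 v2] /=.
  by rewrite lphi scalerDl scalerA.
by rewrite scalerDr !scalerA mulrC.
Qed.

Lemma tensor2_slice_r (psi : V -> k) : linform psi ->
  exists g : T -> U, lin g /\ forall u v, g (t u v) = psi v *: u.
Proof.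
move=> lpsi; apply: tensor2_lift; split=> [v r u1 u2 | u r v1 v2] /=.
  by rewrite scalerDr !scalerA mulrC.
by rewrite lpsi scalerDl scalerA.
Qed.

Lemma tensor2_sum_pure (s : T) :
  exists n (x : 'I_n -> U) (y : 'I_n -> V), s = \sum_(i < n) t (x i) (y i).
Proof.
pose X := [set s : T | exists l : seq (U * V), s = \sum_(p <- l) t p.1 p.2].
have sX : subspace X.
  split; first by exists [::]; rewrite big_nil.
  move=> r _ _ [l1 ->] [l2 ->]; exists (map (fun p => (r *: p.1, p.2)) l1 ++ l2).
  rewrite big_cat big_map scaler_sumr; congr (_ + _).
  by apply: eq_bigr => p _; rewrite (linZ _ _ (tensor_t.1.1 _)).
have [[l ->]|nXs] := pselect (X s).
  exists (size l), (fun i => (nth (0, 0) l i).1), (fun i => (nth (0, 0) l i).2).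
  by rewrite (big_nth (0, 0)) big_mkord.
have [phi [lphi phiX phis]] := separating_linform sX nXs.
have phi0 : (phi : T -> k^o) =1 (fun _ => 0).
  apply: tensor2_ext => // [r x y | u v]; first by rewrite scaler0 addr0.
  by apply: phiX; exists [:: (u, v)]; rewrite big_seq1.
by have := phi0 s; rewrite phis => /eqP; rewrite oner_eq0.
Qed.

Lemma tensor2_jointly_injective (I J : Type) (F : I -> U -> U) (G : J -> V -> V)
    (H : I -> J -> T -> T) :
  (forall i, lin (F i)) -> (forall j, lin (G j)) -> (forall i j, lin (H i j)) ->
  (forall i j u v, H i j (t u v) = t (F i u) (G j v)) ->
  (forall u, (forall i, F i u = 0) -> u = 0) ->
  (forall v, (forall j, G j v = 0) -> v = 0) ->
  forall s, (forall i j, H i j s = 0) -> s = 0.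
Proof.
move=> lF lG lH Ht injF injG s; have [[tl tr] _] := tensor_t.
have [n [x [y ->]]] := tensor2_sum_pure s => Hs0.
have Fx_y0 i : \sum_(m < n) t (F i (x m)) (y m) = 0.
  apply: (bilin_sum_eq0 tensor_t.1 (x := fun m => F i (x m)) (y := y)) => phi lphi.
  apply: injG => j.
  have [g [lg gt]] := tensor2_slice_l lphi.
  rewrite lin_sum //; under eq_bigr do rewrite linZ // -gt -Ht.
  by rewrite -lin_sum // -lin_sum // Hs0 lin0.
have bil_flip : bilin (fun v u => t u v) by split=> [u|v]; [exact: tr | exact: tl].
apply: (bilin_sum_eq0 bil_flip (x := y) (y := x)) => psi lpsi; apply: injF => i.
have [g [lg gt]] := tensor2_slice_r lpsi.
rewrite lin_sum //; under eq_bigr do rewrite linZ // -gt.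
by rewrite -lin_sum // Fx_y0 lin0.
Qed.

End TensorProduct.

Section GaloisMap.
Variables (k : fieldType) (A AA : lmodType k).
Variables (mulA : A -> A -> A) (tens : A -> A -> AA) (mulAA : AA -> AA -> AA).
Variables (Dl : A -> AA -> AA) (T1 T1inv : AA -> AA).
Variables (eps : A -> k) (epsL : AA -> A) (lm1 : A -> AA -> AA).

Hypotheses (bilin_mulA : bilin mulA)
  (mulA_assoc : forall a b c, mulA a (mulA b c) = mulA (mulA a b) c)
  (mulA_nondeg : forall a, (forall b, mulA a b = 0) -> a = 0).
Hypotheses (tensor_tens : is_tensor2 tens) (bilin_mulAA : bilin mulAA)
  (mulAA_tens : forall a b c d,
     mulAA (tens a b) (tens c d) = tens (mulA a c) (mulA b d)).
Hypotheses (lin_Dl : forall a, lin (Dl a))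
  (Dl_mulA : forall a b s, Dl (mulA a b) s = Dl a (Dl b s)).
Hypotheses (lin_T1 : lin T1)
  (T1_tens : forall a b c d,
     mulAA (T1 (tens a b)) (tens c d) = Dl a (tens c (mulA b d)))
  (T1K : cancel T1 T1inv) (T1invK : cancel T1inv T1).
Hypotheses (lin_epsL : lin epsL)
  (epsL_tens : forall a b, epsL (tens a b) = eps a *: b)
  (epsL_T1 : forall a b, epsL (T1 (tens a b)) = mulA a b).
Hypotheses (lin_lm1 : forall c, lin (lm1 c))
  (lm1_tens : forall c a b, lm1 c (tens a b) = tens (mulA c a) b).

Let lin_T1inv : lin T1inv := lin_can lin_T1 T1K T1invK.
Let lin_mulAl b : lin (mulA^~ b) := bilin_mulA.1 b.
Let lin_tensl b : lin (tens^~ b) := tensor_tens.1.1 b.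
Let lin_tensr a : lin (tens a) := tensor_tens.1.2 a.
Let lin_mulAAl t : lin (mulAA^~ t) := bilin_mulAA.1 t.

Lemma mulAA_tens_injl s s' :
  (forall e f, mulAA s (tens e f) = mulAA s' (tens e f)) -> s = s'.
Proof.
move=> ss'; apply/eqP; rewrite -subr_eq0; apply/eqP.
apply: (tensor2_jointly_injective tensor_tens (H := fun e f s => mulAA s (tens e f))
  lin_mulAl lin_mulAl (fun e f => lin_mulAAl _) (fun e f a b => mulAA_tens a b e f)
  mulA_nondeg mulA_nondeg) => e f /=.
by rewrite (linB _ _ (lin_mulAAl _)) ss' subrr.
Qed.

Lemma lin_lm1l s : lin (lm1^~ s).
Proof.
move=> r x y; move: s; apply: (tensor2_ext tensor_tens) => // [|a b].
  exact: lin_add (lin_scale _ (lin_lm1 _)) (lin_lm1 _).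
by rewrite !lm1_tens lin_mulAl lin_tensl.
Qed.

Lemma T1_lm1 x w e f :
  mulAA (T1 (lm1 x w)) (tens e f) = Dl x (mulAA (T1 w) (tens e f)).
Proof.
move: w; apply: (tensor2_ext tensor_tens) => [||a b].
- exact: lin_comp (lin_mulAAl _) (lin_comp lin_T1 (lin_lm1 x)).
- exact: lin_comp (lin_Dl x) (lin_comp (lin_mulAAl _) lin_T1).
by rewrite lm1_tens !T1_tens Dl_mulA.
Qed.

Lemma epsLT1_lm1 x s : epsL (T1 (lm1 x s)) = mulA x (epsL (T1 s)).
Proof.
move: s; apply: (tensor2_ext tensor_tens) => [||a b].
- exact: lin_comp lin_epsL (lin_comp lin_T1 (lin_lm1 x)).
- exact: lin_comp (bilin_mulA.2 x) (lin_comp lin_epsL lin_T1).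
by rewrite lm1_tens !epsL_T1 mulA_assoc.
Qed.

Lemma lm1_T1inv_lift b : exists Phi : AA -> AA,
  lin Phi /\ forall x y, Phi (tens x y) = lm1 x (T1inv (tens b y)).
Proof.
apply: (tensor2_lift tensor_tens); split=> [y | x]; first exact: lin_lm1l.
exact: lin_comp (lin_lm1 x) (lin_comp lin_T1inv (lin_tensr b)).
Qed.

Section PhiMap.
Variables (b : A) (Phi : AA -> AA).
Hypotheses (lin_Phi : lin Phi)
  (Phi_tens : forall x y, Phi (tens x y) = lm1 x (T1inv (tens b y))).

Lemma T1_Phi w e f :
  mulAA (T1 (Phi w)) (tens e f) = mulAA (T1 w) (tens (mulA b e) f).
Proof.
move: w; apply: (tensor2_ext tensor_tens) => [||x y].
- exact: lin_comp (lin_mulAAl _) (lin_comp lin_T1 lin_Phi).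
- exact: lin_comp (lin_mulAAl _) lin_T1.
by rewrite Phi_tens T1_lm1 T1invK mulAA_tens T1_tens.
Qed.

Lemma T1inv_mulA_tens a c : T1inv (tens (mulA a b) c) = Phi (T1inv (tens a c)).
Proof.
apply: (can_inj T1K); rewrite T1invK; apply: mulAA_tens_injl => e f.
by rewrite T1_Phi T1invK !mulAA_tens mulA_assoc.
Qed.

Lemma epsLT1_Phi w : epsL (T1 (Phi w)) = eps b *: epsL (T1 w).
Proof.
move: w; apply: (tensor2_ext tensor_tens) => [||x y].
- exact: lin_comp lin_epsL (lin_comp lin_T1 lin_Phi).
- exact: lin_scale _ (lin_comp lin_epsL lin_T1).
by rewrite Phi_tens epsLT1_lm1 T1invK epsL_tens !epsL_T1 (linZ _ _ (bilin_mulA.2 x)).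
Qed.

End PhiMap.

Lemma eps_mulA x p (q : A) : eps (mulA x p) *: q = eps x *: (eps p *: q).
Proof.
have [Phi [lin_Phi Phi_tens]] := lm1_T1inv_lift p.
rewrite -epsL_tens -(T1invK (tens _ q)) (T1inv_mulA_tens lin_Phi Phi_tens).
by rewrite (epsLT1_Phi lin_Phi Phi_tens) T1invK epsL_tens scalerA mulrC -scalerA.
Qed.

Lemma epsL_lm1 x w : epsL (lm1 x w) = eps x *: epsL w.
Proof.
move: w; apply: (tensor2_ext tensor_tens) => [||a b].
- exact: lin_comp lin_epsL (lin_lm1 x).
- exact: lin_scale _ lin_epsL.
by rewrite lm1_tens !epsL_tens eps_mulA.
Qed.

Lemma S_mulA a b c :
  S_of tens epsL T1inv (mulA a b) c =
  S_of tens epsL T1inv b (S_of tens epsL T1inv a c).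
Proof.
have [Phi [lin_Phi Phi_tens]] := lm1_T1inv_lift b.
rewrite /S_of (T1inv_mulA_tens lin_Phi Phi_tens).
move: (T1inv _); apply: (tensor2_ext tensor_tens) => [||x y].
- exact: lin_comp lin_epsL lin_Phi.
- exact: lin_comp lin_epsL (lin_comp lin_T1inv (lin_comp (lin_tensr b) lin_epsL)).
by rewrite Phi_tens epsL_lm1 !epsL_tens !linZ.
Qed.

End GaloisMap.

Theorem lemma3p2
  (k : fieldType) (A AA AAA : lmodType k)
  (* the algebra A *)
  (mulA : A -> A -> A) (HA : nondeg_assoc_algebra mulA)
  (* A (x) A and A (x) A (x) A *)
  (tens : A -> A -> AA) (Htens : is_tensor2 tens)
  (tens3 : A -> A -> A -> AAA) (Htens3 : is_tensor3 tens3)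
  (* product of the algebra A (x) A *)
  (mulAA : AA -> AA -> AA) (HmulAA_bil : bilin mulAA)
  (HmulAA : forall a b c d,
     mulAA (tens a b) (tens c d) = tens (mulA a c) (mulA b d))
  (* Delta : A -> M(A (x) A), Delta a = (Dl a, Dr a) *)
  (Dl Dr : A -> AA -> AA)
  (HDmult : forall a, is_multiplier mulAA (Dl a) (Dr a))
  (HDlin : forall (r : k) a b x,
     Dl (r *: a + b) x = r *: Dl a x + Dl b x /\
     Dr (r *: a + b) x = r *: Dr a x + Dr b x)
  (HDhom : forall a b x,
     Dl (mulA a b) x = Dl a (Dl b x) /\ Dr (mulA a b) x = Dr b (Dr a x))
  (* Galois maps T1 (a (x) b) = Delta(a)(1 (x) b), T2 (a (x) b) = (a (x) 1)Delta(b),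
     lying in A (x) A *)
  (T1 T2 : AA -> AA) (HT1lin : lin T1) (HT2lin : lin T2)
  (HT1 : forall a b c d,
     mulAA (T1 (tens a b)) (tens c d) = Dl a (tens c (mulA b d)))
  (HT2 : forall a b c d,
     mulAA (tens c d) (T2 (tens a b)) = Dr b (tens (mulA c a) d))
  (* counit-like map eps *)
  (eps : A -> k) (Heps : linform eps)
  (epsL epsR : AA -> A) (HepsLlin : lin epsL) (HepsRlin : lin epsR)
  (HepsL : forall a b, epsL (tens a b) = eps a *: b)
  (HepsR : forall a b, epsR (tens a b) = eps b *: a)
  (HepsT1 : forall a b, epsL (T1 (tens a b)) = mulA a b)
  (HepsT2 : forall a b, epsR (T2 (tens a b)) = mulA a b)
  (* bijectivity of T1, T2 *)
  (T1inv T2inv : AA -> AA)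
  (HT1inv : cancel T1 T1inv /\ cancel T1inv T1)
  (HT2inv : cancel T2 T2inv /\ cancel T2inv T2)
  (* auxiliary canonical maps, determined by their values on pure tensors *)
  (tl : A -> AA -> AAA) (Htl_lin : forall a, lin (tl a))
  (Htl : forall a b c, tl a (tens b c) = tens3 a b c)           (* a (x) t *)
  (tr : AA -> A -> AAA) (Htr_lin : forall c, lin (fun t => tr t c))
  (Htr : forall a b c, tr (tens a b) c = tens3 a b c)           (* t (x) c *)
  (lm1 : A -> AA -> AA) (Hlm1_lin : forall c, lin (lm1 c))
  (Hlm1 : forall c a b, lm1 c (tens a b) = tens (mulA c a) b)   (* (c (x) 1) t *)
  (rm1 : A -> AA -> AA) (Hrm1_lin : forall c, lin (rm1 c))
  (Hrm1 : forall c a b, rm1 c (tens a b) = tens a (mulA b c))   (* t (1 (x) c) *)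
  (idT1inv : AAA -> AAA) (HidT1inv_lin : lin idT1inv)
  (HidT1inv : forall a b c,
     idT1inv (tens3 a b c) = tl a (T1inv (tens b c)))           (* id (x) T1^{-1} *)
  (T2invid : AAA -> AAA) (HT2invid_lin : lin T2invid)
  (HT2invid : forall a b c,
     T2invid (tens3 a b c) = tr (T2inv (tens a b)) c)           (* T2^{-1} (x) id *)
  (mideps : AAA -> AA) (Hmideps_lin : lin mideps)
  (Hmideps : forall a b c,
     mideps (tens3 a b c) = eps b *: tens a c)                  (* id (x) eps (x) id *)
  (* left A-colinearity of T1^{-1} (covered by c (x) 1 (x) 1 on the left) *)
  (HcolinL : forall a b c,
     lm1 c (T1inv (tens a b)) = mideps (idT1inv (tr (T2 (tens c a)) b)))
  (* right A-colinearity of T2^{-1} (covered by 1 (x) 1 (x) c on the right) *)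
  (HcolinR : forall a b c,
     rm1 c (T2inv (tens a b)) = mideps (T2invid (tl a (T1 (tens b c))))) :
  (* S(ab) = S(b) S(a) as left multipliers of A *)
  forall a b c : A,
    S_of tens epsL T1inv (mulA a b) c =
    S_of tens epsL T1inv b (S_of tens epsL T1inv a c).
Proof.
move=> a b c.
have [bilin_mulA mulA_assoc mulA_nondeg _] := HA.
have lin_Dl x : lin (Dl x) by case: (HDmult x).
have Dl_mulA x y s : Dl (mulA x y) s = Dl x (Dl y s) by case: (HDhom x y s).
have [T1K T1invK] := HT1inv.
exact: (S_mulA bilin_mulA mulA_assoc mulA_nondeg Htens HmulAA_bil HmulAA lin_Dl
  Dl_mulA HT1lin HT1 T1K T1invK HepsLlin HepsL HepsT1 Hlm1_lin Hlm1).
Qed.
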